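(* Let $\alpha=\alpha(\delta,f^\delta)$ be chosen by the discrepancy principle with fixed radii $1<\underline\tau\le\overline\tau<\infty$, and suppose $\varphi^\dagger$ satisfies the variational source condition with constant $\sigma\in(0,1]$ and concave index function $\Psi$, and in particular that $\frac{\sigma}{2}\big(J(\varphi^\dagger)-J(\varphi)\big)\le\Psi(\|\mathcal T\varphi-\mathcal T\varphi^\dagger\|_{\mathcal H})$ for all $\varphi\in\mathcal V$. Then $$\frac{\sigma}{4}(\underline\tau-1)\frac{\delta^2}{\Psi(\delta)}\le\alpha(\delta,f^\delta).$$
   Context: Let $\mathcal V$ be a Banach space with dual pairing $\langle\cdot,\cdot\rangle$, $\mathcal H$ a Hilbert space, and $\mathcal T:\mathcal V\to\mathcal H$ a bounded linear, injective, compact operator. Let $J:\mathcal V\to[0,\infty)$ be convex, with subdifferential $\partial J(u)=\{p\in\mathcal V^*: J(v)-J(u)-\langle p,v-u\rangle\ge0\ \forall v\}$; for $p\in\partial J(u^* )$ the Bregman distance is $D_J(u,u^* )=J(u)-J(u^* )-\langle p,u-u^*\rangle$. Exact data $f^\dagger$, noise level $\delta>0$, noisy data $f^\delta$ with $\|f^\dagger-f^\delta\|_{\mathcal H}\le\delta$. $F_\alpha(\varphi,f^\delta)=\frac12\|\mathcal T\varphi-f^\delta\|^2_{\mathcal H}+\alpha J(\varphi)$ and $\varphi^\delta_\alpha$ is a minimizer of $F_\alpha(\cdot,f^\delta)$. $\varphi^\dagger$ is a $J$-minimizing solution: $\mathcal T\varphi^\dagger=f^\dagger$, $J(\varphi^\dagger)=\min\{J(\varphi):\mathcal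 T\varphi=f^\dagger\}$. An index function is a continuous, monotonically increasing $\Psi:[0,\infty)\to[0,\infty)$ with $\Psi(0)=0$, positive on $(0,\infty)$. Discrepancy principle: $\underline\tau\delta\le\|\mathcal T\varphi^\delta_{\alpha(\delta,f^\delta)}-f^\delta\|_{\mathcal H}\le\overline\tau\delta$. Variational source condition (VSC): there exist $\sigma\in(0,1]$ and a concave index function $\Psi$ with $\frac\sigma2D_J(\varphi,\varphi^\dagger)\le J(\varphi)-J(\varphi^\dagger)+\Psi(\|\mathcal T\varphi-\mathcal T\varphi^\dagger\|_{\mathcal H})$ for all $\varphi\in\mathcal V$ (with a fixed $p\in\partial J(\varphi^\dagger)$). *)

From Stdlib Require Import Reals.
Open Scope R_scope.

Record NormedSpace := {
  ns_car :> Type;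
  ns_add : ns_car -> ns_car -> ns_car;
  ns_scal : R -> ns_car -> ns_car;
  ns_zero : ns_car;
  ns_norm : ns_car -> R;
  ns_add_assoc : forall x y z, ns_add x (ns_add y z) = ns_add (ns_add x y) z;
  ns_add_comm : forall x y, ns_add x y = ns_add y x;
  ns_add_zero : forall x, ns_add x ns_zero = x;
  ns_add_opp : forall x, ns_add x (ns_scal (-1) x) = ns_zero;
  ns_scal_assoc : forall a b x, ns_scal a (ns_scal b x) = ns_scal (a * b) x;
  ns_scal_one : forall x, ns_scal 1 x = x;
  ns_scal_distr_vec : forall a x y, ns_scal a (ns_add x y) = ns_add (ns_scal a x) (ns_scal a y);
  ns_scal_distr_scal : forall a b x, ns_scal (a + b) x = ns_add (ns_scal a x) (ns_scal b x);
  ns_norm_zero_iff : forall x, ns_norm x = 0 <-> x = ns_zero;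
  ns_norm_scal : forall a x, ns_norm (ns_scal a x) = Rabs a * ns_norm x;
  ns_norm_triangle : forall x y, ns_norm (ns_add x y) <= ns_norm x + ns_norm y
}.

Arguments ns_add {_}.
Arguments ns_scal {_}.
Arguments ns_zero {_}.
Arguments ns_norm {_}.

Definition ns_sub {N : NormedSpace} (x y : N) : N := ns_add x (ns_scal (-1) y).

Definition cauchy_seq {N : NormedSpace} (u : nat -> N) : Prop :=
  forall eps, eps > 0 -> exists n0 : nat, forall m n, (m >= n0)%nat -> (n >= n0)%nat ->
    ns_norm (ns_sub (u m) (u n)) < eps.

Definition converges_to {N : NormedSpace} (u : nat -> N) (l : N) : Prop :=
  forall eps, eps > 0 -> exists n0 : nat, forall n, (n >= n0)%nat ->
    ns_norm (ns_sub (u n) l) < eps.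

Definition complete (N : NormedSpace) : Prop :=
  forall u : nat -> N, cauchy_seq u -> exists l, converges_to u l.

Definition is_banach (V : NormedSpace) : Prop := complete V.

Definition is_inner_product (H : NormedSpace) (ip : H -> H -> R) : Prop :=
  (forall x y, ip x y = ip y x) /\
  (forall x y z, ip (ns_add x y) z = ip x z + ip y z) /\
  (forall a x y, ip (ns_scal a x) y = a * ip x y) /\
  (forall x, 0 <= ip x x) /\
  (forall x, ip x x = 0 -> x = ns_zero).

Definition is_hilbert (H : NormedSpace) : Prop :=
  complete H /\
  exists ip : H -> H -> R, is_inner_product H ip /\ forall x, ns_norm x = sqrt (ip x x).

Definition is_linear {V W : NormedSpace} (T : V -> W) : Prop :=
  (forall x y, T (ns_add x y) = ns_add (T x) (T y)) /\
  (forall a x, T (ns_scal a x) = ns_scal a (T x)).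

Definition is_bounded_op {V W : NormedSpace} (T : V -> W) : Prop :=
  exists C, forall x, ns_norm (T x) <= C * ns_norm x.

Definition is_injective {A B : Type} (f : A -> B) : Prop :=
  forall x y, f x = f y -> x = y.

Definition is_compact_op {V W : NormedSpace} (T : V -> W) : Prop :=
  forall u : nat -> V, (exists M, forall n, ns_norm (u n) <= M) ->
    exists (phi : nat -> nat) (l : W),
      (forall n, (phi n < phi (S n))%nat) /\ converges_to (fun n => T (u (phi n))) l.

Definition in_dual {V : NormedSpace} (p : V -> R) : Prop :=
  (forall x y, p (ns_add x y) = p x + p y) /\
  (forall a x, p (ns_scal a x) = a * p x) /\
  (exists C, forall x, Rabs (p x) <= C * ns_norm x).

Definition convex_fun {V : NormedSpace} (J : V -> R) : Prop :=
  forall (t : R) (x y : V), 0 <= t <= 1 ->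
    J (ns_add (ns_scal t x) (ns_scal (1 - t) y)) <= t * J x + (1 - t) * J y.

Definition in_subdiff {V : NormedSpace} (J : V -> R) (u : V) (p : V -> R) : Prop :=
  in_dual p /\ forall v, J v - J u - p (ns_sub v u) >= 0.

Definition bregman {V : NormedSpace} (J : V -> R) (p : V -> R) (u ustar : V) : R :=
  J u - J ustar - p (ns_sub u ustar).

Definition tikhonov {V H : NormedSpace} (T : V -> H) (J : V -> R)
    (alpha : R) (phi : V) (f : H) : R :=
  / 2 * (ns_norm (ns_sub (T phi) f)) ^ 2 + alpha * J phi.

Definition is_minimizer {V H : NormedSpace} (T : V -> H) (J : V -> R)
    (alpha : R) (f : H) (phi : V) : Prop :=
  forall psi : V, tikhonov T J alpha phi f <= tikhonov T J alpha psi f.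

Definition is_J_minimizing_solution {V H : NormedSpace} (T : V -> H) (J : V -> R)
    (f : H) (phi : V) : Prop :=
  T phi = f /\ forall psi : V, T psi = f -> J phi <= J psi.

Definition index_function (Psi : R -> R) : Prop :=
  (forall x, 0 <= x -> forall eps, eps > 0 -> exists d, d > 0 /\
      forall y, 0 <= y -> Rabs (y - x) < d -> Rabs (Psi y - Psi x) < eps) /\
  (forall x y, 0 <= x -> x <= y -> Psi x <= Psi y) /\
  Psi 0 = 0 /\
  (forall x, 0 <= x -> 0 <= Psi x) /\
  (forall x, 0 < x -> 0 < Psi x).

Definition concave_on_nonneg (Psi : R -> R) : Prop :=
  forall t x y, 0 <= t <= 1 -> 0 <= x -> 0 <= y ->
    t * Psi x + (1 - t) * Psi y <= Psi (t * x + (1 - t) * y).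

Definition VSC {V H : NormedSpace} (T : V -> H) (J : V -> R) (phidag : V)
    (p : V -> R) (sigma : R) (Psi : R -> R) : Prop :=
  0 < sigma <= 1 /\ index_function Psi /\ concave_on_nonneg Psi /\
  in_subdiff J phidag p /\
  forall phi : V, sigma / 2 * bregman J p phi phidag
     <= J phi - J phidag + Psi (ns_norm (ns_sub (T phi) (T phidag))).

(* Comparing the Tikhonov minimizer with the exact solution gives
   (r^2 - delta^2)/2 <= alpha (J phidag - J phi_alpha) for the residual r, and the
   source condition bounds the right-hand side by alpha Psi(r + delta) / (sigma/2).
   A concave index function is sublinear, Psi(r + delta) <= (r + delta)/delta Psi(delta),
   so dividing by r + delta leaves sigma delta (r - delta) <= 4 alpha Psi(delta);
   the discrepancy principle r >= tau_lo delta concludes. *)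

From Stdlib Require Import Reals Lra.
Open Scope R_scope.

Lemma ns_norm_opp (N : NormedSpace) (x : N) : ns_norm (ns_scal (-1) x) = ns_norm x.
Proof. rewrite ns_norm_scal, Rabs_left; lra. Qed.

Lemma ns_norm_ge0 (N : NormedSpace) (x : N) : 0 <= ns_norm x.
Proof.
  pose proof (ns_norm_triangle N x (ns_scal (-1) x)) as Htri.
  rewrite ns_add_opp, ns_norm_opp, (proj2 (ns_norm_zero_iff N ns_zero) eq_refl) in Htri.
  lra.
Qed.

Lemma ns_sub_split (N : NormedSpace) (a b c : N) :
  ns_sub a c = ns_add (ns_sub a b) (ns_sub b c).
Proof.
  unfold ns_sub.
  rewrite <- ns_add_assoc, (ns_add_assoc _ (ns_scal (-1) b) b).
  rewrite (ns_add_comm _ (ns_scal (-1) b) b), ns_add_opp, (ns_add_comm _ ns_zero), ns_add_zero.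
  reflexivity.
Qed.

Lemma ns_norm_sub_sym (N : NormedSpace) (a b : N) :
  ns_norm (ns_sub a b) = ns_norm (ns_sub b a).
Proof.
  assert (Hopp : ns_sub a b = ns_scal (-1) (ns_sub b a)).
  { unfold ns_sub. rewrite ns_scal_distr_vec, ns_scal_assoc.
    replace (-1 * -1) with 1 by ring.
    rewrite ns_scal_one, ns_add_comm. reflexivity. }
  rewrite Hopp, ns_norm_opp. reflexivity.
Qed.

Lemma ns_norm_sub_triangle (N : NormedSpace) (a b c : N) :
  ns_norm (ns_sub a c) <= ns_norm (ns_sub a b) + ns_norm (ns_sub b c).
Proof. rewrite (ns_sub_split N a b c). apply ns_norm_triangle. Qed.

(* Concavity between 0 and y, with Psi 0 = 0, evaluated at x = (x/y) y + (1 - x/y) 0. *)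
Lemma concave_sublinear (Psi : R -> R) (x y : R) :
  concave_on_nonneg Psi -> Psi 0 = 0 -> 0 <= x <= y -> 0 < y ->
  x * Psi y <= y * Psi x.
Proof.
  intros Hconc HPsi0 Hxy Hy.
  assert (Ht : 0 <= x / y <= 1).
  { split.
    - apply Rmult_le_pos; [lra | apply Rlt_le, Rinv_0_lt_compat; lra].
    - apply Rmult_le_reg_r with y; [lra|]. field_simplify; lra. }
  pose proof (Hconc (x / y) y 0 Ht ltac:(lra) ltac:(lra)) as Hchord.
  replace (x / y * y + (1 - x / y) * 0) with x in Hchord by (field; lra).
  rewrite HPsi0 in Hchord.
  apply Rmult_le_compat_l with (r := y) in Hchord; [|lra].
  replace (y * (x / y * Psi y + (1 - x / y) * 0)) with (x * Psi y) in Hchord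
    by (field; lra).
  exact Hchord.
Qed.

Lemma tikhonov_minimizer_residual {V H : NormedSpace} (T : V -> H) (J : V -> R)
    (alpha delta : R) (f : H) (phi psi : V) :
  is_minimizer T J alpha f phi -> ns_norm (ns_sub (T psi) f) <= delta ->
  (ns_norm (ns_sub (T phi) f)) ^ 2 - delta ^ 2 <= 2 * alpha * (J psi - J phi).
Proof.
  intros Hmin Hpsi.
  pose proof (Hmin psi) as Hcmp. unfold tikhonov in Hcmp.
  pose proof (ns_norm_ge0 H (ns_sub (T psi) f)).
  assert (ns_norm (ns_sub (T psi) f) ^ 2 <= delta ^ 2) by (apply pow_incr; lra).
  lra.
Qed.

Lemma scaled_gap_le (sigma alpha delta r Q P : R) :
  0 < alpha -> 0 < delta <= r ->
  sigma * (r ^ 2 - delta ^ 2) <= 4 * alpha * Q -> delta * Q <= (r + delta) * P ->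
  sigma * delta * (r - delta) <= 4 * alpha * P.
Proof.
  intros Halpha Hdr Hgap Hsublin.
  apply Rmult_le_reg_r with (r + delta); [lra|].
  apply Rle_trans with (delta * (sigma * (r ^ 2 - delta ^ 2))); [nra|].
  apply Rle_trans with (4 * alpha * (delta * Q)); nra.
Qed.

Lemma regularization_parameter_lower_bound (sigma alpha delta tau r P : R) :
  0 < sigma -> 0 < delta -> 0 < P -> tau * delta <= r ->
  sigma * delta * (r - delta) <= 4 * alpha * P ->
  sigma / 4 * (tau - 1) * (delta ^ 2 / P) <= alpha.
Proof.
  intros Hsigma Hdelta HP Hdp Hgap.
  apply Rmult_le_reg_r with P; [lra|].
  replace (sigma / 4 * (tau - 1) * (delta ^ 2 / P) * P)
    with (sigma * delta * (tau * delta - delta) / 4) by (field; lra).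
  assert (sigma * delta * (tau * delta - delta) <= sigma * delta * (r - delta))
    by (apply Rmult_le_compat_l; nra).
  lra.
Qed.

Theorem mainTheorem2
  (V H : NormedSpace) (T : V -> H) (J : V -> R)
  (HV : is_banach V) (HH : is_hilbert H)
  (HTlin : is_linear T) (HTbd : is_bounded_op T) (HTinj : is_injective T)
  (HTcpt : is_compact_op T)
  (HJnn : forall v, 0 <= J v) (HJconv : convex_fun J)
  (fdag fdelta : H) (delta : R) (Hdelta : 0 < delta)
  (Hnoise : ns_norm (ns_sub fdag fdelta) <= delta)
  (phidag : V) (Hphidag : is_J_minimizing_solution T J fdag phidag)
  (p : V -> R) (sigma : R) (Psi : R -> R)
  (Hvsc : VSC T J phidag p sigma Psi)
  (Hvsc' : forall phi : V,
      sigma / 2 * (J phidag - J phi) <= Psi (ns_norm (ns_sub (T phi) (T phidag))))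
  (tau_lo tau_hi : R) (Htau : 1 < tau_lo <= tau_hi)
  (alpha : R) (Halpha : 0 < alpha) (phi_alpha : V)
  (Hmin : is_minimizer T J alpha fdelta phi_alpha)
  (Hdp : tau_lo * delta <= ns_norm (ns_sub (T phi_alpha) fdelta) <= tau_hi * delta) :
  sigma / 4 * (tau_lo - 1) * (delta ^ 2 / Psi delta) <= alpha.
Proof.
  destruct Hvsc as [[Hsigma _] [[_ [Hmono [HPsi0 [_ Hpos]]]] [Hconc _]]].
  destruct Hphidag as [HTdag _].
  set (r := ns_norm (ns_sub (T phi_alpha) fdelta)) in *.
  set (d := ns_norm (ns_sub (T phi_alpha) (T phidag))).
  assert (Hr : delta <= r) by nra.
  assert (Hd_le : d <= r + delta).
  { pose proof (ns_norm_sub_triangle H (T phi_alpha) fdelta (T phidag)) as Htri.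
    rewrite HTdag, (ns_norm_sub_sym H fdelta) in Htri. fold r in Htri.
    unfold d. rewrite HTdag. lra. }
  assert (Hres : r ^ 2 - delta ^ 2 <= 2 * alpha * (J phidag - J phi_alpha))
    by (apply (tikhonov_minimizer_residual T J); rewrite ?HTdag; assumption).
  assert (HPsi_d : Psi d <= Psi (r + delta))
    by (apply Hmono; [apply ns_norm_ge0 | exact Hd_le]).
  pose proof (Hvsc' phi_alpha) as Hsource. fold d in Hsource.
  assert (Hgap : sigma * (r ^ 2 - delta ^ 2) <= 4 * alpha * Psi (r + delta)).
  { apply Rle_trans with (4 * alpha * (sigma / 2 * (J phidag - J phi_alpha))).
    - replace (4 * alpha * (sigma / 2 * (J phidag - J phi_alpha)))
        with (sigma * (2 * alpha * (J phidag - J phi_alpha))) by field.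
      apply Rmult_le_compat_l; lra.
    - apply Rmult_le_compat_l; lra. }
  apply regularization_parameter_lower_bound with (r := r);
    [lra | lra | apply Hpos; lra | apply Hdp |].
  apply scaled_gap_le with (Psi (r + delta)); [lra | lra | exact Hgap |].
  apply concave_sublinear; [exact Hconc | exact HPsi0 | lra | lra].
Qed.
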